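(* For every BIMS channel with capacity $C$ and every $R\ge0$, the expurgated exponent satisfies $$E_{\rm ex}^{\rm bsc}(R;C)\le E_{\rm ex}(R)\le E_{\rm ex}^{\rm bec}(R;C).$$
   Context: A BIMS (binary-input memoryless symmetric) channel is a memoryless channel with input alphabet $\{x_0,x_1\}$, finite output alphabet $\mathcal Y$ and transition probabilities $P_{Y|X}(y|x)$. It is symmetric in Gallager's sense: the columns of the $2\times|\mathcal Y|$ transition matrix (rows indexed by inputs) can be partitioned into submatrices such that, in each submatrix, every row is a permutation of every other row and every column is a permutation of every other column. The capacity $C$ is $I(X;Y)$ under equiprobable inputs, in bits, and logarithms are base 2. The Bhattacharyya parameter is $Z=\sum_y\sqrt{P_{Y|X}(y|x_0)P_{Y|X}(y|x_1)}$. For $\rho\ge1$ and $Z\in[0,1]$, let $$E_x(\rho;Z)=-\rho\log\frac{1+Z^{1/\rho}}{2},\qquad E_{\rm ex}(R)=\sup_{\rho\ge1}\bigl(E_x(\rho;Z)-\rho R\bigr).$$ Define $$E_{\rm ex}^{\rm bec}(R;C)=\sup_{\rho\ge1}\bigl(E_x(\rho;1-C)-\rho R\bigr),\qquad E_{\rm ex}^{\rm bsc}(R;C)=\sup_{\rho\ge1}\bigl(E_x(\rho;2\sqrt{\varepsilon(1-\varepsilon)})-\rho R\bigr),$$ where $\varepsilon=h^{-1}(1-C)$, $h$ is the binary entropy function and $h^{-1}$ its inverse on $[0,\tfrac12]$. These are the expurgated exponents of the BEC and BSC of capacity $C$. *)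

From Stdlib Require Import Reals Lra List Permutation Classical ClassicalEpsilon.
Import ListNotations.
Open Scope R_scope.

Definition log2 (x : R) : R := ln x / ln 2.

(** Real power Z^a with the convention 0^a = 0 (for a > 0), Z >= 0. *)
Definition rpow (z a : R) : R :=
  if Rle_dec z 0 then 0 else Rpower z a.

Fixpoint sumn (n : nat) (f : nat -> R) : R :=
  match n with O => 0 | S k => sumn k f + f k end.

(** A binary-input channel with finite output alphabet {0,..,n-1}:
    W x y = P_{Y|X}(y|x), inputs x0 = false, x1 = true. *)
Definition is_channel (n : nat) (W : bool -> nat -> R) : Prop :=
  (forall x y, (y < n)%nat -> 0 <= W x y) /\
  (forall x, sumn n (W x) = 1).

Definition block_cols (n : nat) (blk : nat -> nat) (b : nat) : list nat :=
  filter (fun y => Nat.eqb (blk y) b) (seq 0 n).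

(** Symmetry in Gallager's sense: the columns can be partitioned into
    submatrices (blocks) such that in each submatrix every row is a
    permutation of every other row and every column is a permutation of
    every other column. *)
Definition gallager_symmetric (n : nat) (W : bool -> nat -> R) : Prop :=
  exists blk : nat -> nat,
    forall b : nat,
      Permutation (map (W false) (block_cols n blk b))
                  (map (W true) (block_cols n blk b)) /\
      (forall y y', In y (block_cols n blk b) -> In y' (block_cols n blk b) ->
         Permutation [W false y; W true y] [W false y'; W true y']).

Definition BIMS (n : nat) (W : bool -> nat -> R) : Prop :=
  is_channel n W /\ gallager_symmetric n W.

(** Capacity: I(X;Y) in bits under equiprobable inputs (0 log 0 = 0). *)
Definition mi_term (W : bool -> nat -> R) (x : bool) (y : nat) : R :=
  if Req_EM_T (W x y) 0 then 0
  else / 2 * W x y * log2 (W x y / ((W false y + W true y) / 2)).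

Definition capacity (n : nat) (W : bool -> nat -> R) : R :=
  sumn n (fun y => mi_term W false y + mi_term W true y).

Definition bhattacharyya (n : nat) (W : bool -> nat -> R) : R :=
  sumn n (fun y => sqrt (W false y * W true y)).

Definition xlog2x (p : R) : R := if Req_EM_T p 0 then 0 else p * log2 p.
Definition hb (p : R) : R := - xlog2x p - xlog2x (1 - p).

Definition Ex (rho Z : R) : R := - rho * log2 ((1 + rpow Z (/ rho)) / 2).

(** Extended reals (the supremum may be +infinity, e.g. Z = 0, R = 0). *)
Inductive Rbar : Type := Finite (r : R) | p_infty.

Definition Rbar_le (a b : Rbar) : Prop :=
  match a, b with
  | _, p_infty => True
  | p_infty, Finite _ => False
  | Finite x, Finite y => x <= y
  end.

Definition img_ge1 (f : R -> R) (v : R) : Prop := exists rho, 1 <= rho /\ v = f rho.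

Lemma img_ge1_ne (f : R -> R) : exists v, img_ge1 f v.
Proof. exists (f 1); exists 1; split; [lra | reflexivity]. Qed.

Definition sup_ge1 (f : R -> R) : Rbar :=
  match excluded_middle_informative (bound (img_ge1 f)) with
  | left H => Finite (proj1_sig (completeness (img_ge1 f) H (img_ge1_ne f)))
  | right _ => p_infty
  end.

(** E_ex(R) for a channel with Bhattacharyya parameter Z. *)
Definition Eex (Z Rt : R) : Rbar := sup_ge1 (fun rho => Ex rho Z - rho * Rt).

(** Expurgated exponents of the BEC and BSC of capacity C
    (eps is h^{-1}(1 - C)). *)
Definition Eex_bec (Rt C : R) : Rbar := Eex (1 - C) Rt.
Definition Eex_bsc_eps (Rt eps : R) : Rbar := Eex (2 * sqrt (eps * (1 - eps))) Rt.

(** Since [Eex Z R] is antitone in the Bhattacharyya parameter [Z], the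
    theorem reduces to the two bounds
        1 - C  <=  Z  <=  2 sqrt(eps (1 - eps)),    h(eps) = 1 - C,
    the parameters of the BEC and of the BSC of capacity [C].

    Both bounds are proved column by column.  A column [(a, b)] of the
    transition matrix with weight [w = (a+b)/2] and log-likelihood ratio
    [u = |ln (b/a)|] contributes [w * g u] to [Z] and [w * H u] to
    [ln 2 * (1 - C)], where [g u = 1 / cosh (u/2)] and [H u] is the binary
    entropy (in nats) of the distribution with log-ratio [u]; columns with
    a zero entry contribute [0] to both.  The lower bound is the pointwise
    inequality [H <= ln 2 * g].  The upper bound comes from the fact that
    [g] is a concave function of [H]: at every [v > 0] the tangent line
    [g u <= g v + s (H u - H v)], [s = 2 sinh(v/2) / v], holds for all
    [u >= 0]; summing it over the columns with [v] the log-ratio of the BSC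
    gives the claim.  Both pointwise inequalities follow from a sign
    analysis of the derivative of [a * g - b * H], which changes sign at
    most once because [sinh(u/2)/u] is increasing. *)

From Stdlib Require Import Reals Lra Lia ClassicalEpsilon.
From Coquelicot Require Import Rcomplements Hierarchy Derive AutoDerive.
Open Scope R_scope.

Lemma nondecreasing_of_deriv (f df : R -> R) (a b : R) : a <= b ->
  (forall x, a <= x <= b -> is_derive f x (df x)) ->
  (forall x, a <= x <= b -> 0 <= df x) -> f a <= f b.
Proof.
  intros [Hab|<-] Hd Hsign; [|lra].
  destruct (MVT_cor2 f df a b Hab) as [c [Hc Hcab]].
  - intros c Hc. apply is_derive_Reals, Hd; exact Hc.
  - assert (0 <= df c) by (apply Hsign; lra). nra.
Qed.

Lemma nonincreasing_of_deriv (f df : R -> R) (a b : R) : a <= b ->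
  (forall x, a <= x <= b -> is_derive f x (df x)) ->
  (forall x, a <= x <= b -> df x <= 0) -> f b <= f a.
Proof.
  intros Hab Hd Hsign.
  enough (- f a <= - f b) by lra.
  apply (nondecreasing_of_deriv (fun x => - f x) (fun x => - df x)); [exact Hab| |].
  - intros x Hx. apply (@is_derive_opp R_AbsRing R_NormedModule f x (df x)), Hd, Hx.
  - intros x Hx. specialize (Hsign x Hx). lra.
Qed.

Lemma ln2_pos : 0 < ln 2.
Proof. pose proof ln_lt_2. lra. Qed.

Lemma exp_half (u : R) : exp u = exp (u/2) * exp (u/2).
Proof. rewrite <- exp_plus. f_equal. field. Qed.

(** ** The profiles [g], [H] and the function [2 sinh(u/2)] *)

(** [g u = 1 / cosh(u/2)]: the Bhattacharyya coefficient of the binary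
    distribution with log-likelihood ratio [u]. *)
Definition bhat_profile (u : R) : R := 2 * exp (u/2) / (1 + exp u).

(** The entropy, in nats, of the binary distribution with log-ratio [u]. *)
Definition ent_profile (u : R) : R := ln (1 + exp u) - u * exp u / (1 + exp u).

Definition sinh2 (u : R) : R := exp (u/2) - exp (- (u/2)).

Lemma bhat_profile_pos (u : R) : 0 < bhat_profile u.
Proof.
  unfold bhat_profile. pose proof (exp_pos (u/2)). pose proof (exp_pos u).
  apply Rdiv_lt_0_compat; lra.
Qed.

Lemma sinh2_0 : sinh2 0 = 0.
Proof. unfold sinh2. replace (0/2) with 0 by field. rewrite Ropp_0. ring. Qed.

Lemma sinh2_nonneg (u : R) : 0 <= u -> 0 <= sinh2 u.
Proof.
  intros Hu. unfold sinh2.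
  destruct (Req_dec u 0) as [->|Hu0].
  - replace (0/2) with 0 by field. rewrite Ropp_0. lra.
  - pose proof (exp_increasing (- (u/2)) (u/2) ltac:(lra)). lra.
Qed.

(** [sinh x <= x cosh x] for [x >= 0]: the numerator of the derivative of
    [sinh2 u / u] is nonnegative. *)
Lemma sinh2_le_u_cosh (u : R) : 0 <= u ->
  sinh2 u <= u * (exp (u/2) + exp (- (u/2))) / 2.
Proof.
  intros Hu.
  set (f x := x * (exp (x/2) + exp (- (x/2))) / 2 - sinh2 x).
  enough (f 0 <= f u) by (unfold f in *; rewrite sinh2_0 in *; lra).
  apply (nondecreasing_of_deriv f (fun x => x * sinh2 x / 4)); [exact Hu| |].
  - intros x _. unfold f, sinh2. auto_derive; [auto|].
    change (x * / 2) with (x/2). field.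
  - intros x Hx. pose proof (sinh2_nonneg x ltac:(lra)).
    apply Rmult_le_pos; [nra | lra].
Qed.

Lemma sinh2_ratio_mono (w v : R) : 0 < w -> w <= v -> sinh2 w * v <= sinh2 v * w.
Proof.
  intros Hw Hwv.
  assert (Hratio : sinh2 w / w <= sinh2 v / v).
  { apply (nondecreasing_of_deriv (fun u => sinh2 u / u)
      (fun u => (u * (exp (u/2) + exp (- (u/2))) / 2 - sinh2 u) / (u*u))); [exact Hwv| |].
    - intros x Hx. unfold sinh2. auto_derive; [lra|].
      change (x * / 2) with (x/2). field. lra.
    - intros x Hx. pose proof (sinh2_le_u_cosh x ltac:(lra)).
      apply Rdiv_le_0_compat; nra. }
  apply (Rmult_le_compat_r (w*v)) in Hratio; [|nra].
  replace (sinh2 w / w * (w * v)) with (sinh2 w * v) in Hratio by (field; lra).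
  replace (sinh2 v / v * (w * v)) with (sinh2 v * w) in Hratio by (field; lra).
  exact Hratio.
Qed.

Lemma ent_profile_le_inv (w : R) : 0 < w -> ent_profile w <= 5 / w.
Proof.
  intros Hw. unfold ent_profile.
  set (E := exp w).
  assert (HE : 0 < E) by apply exp_pos.
  assert (HE2 : w*w/4 + w <= E).
  { assert (1 + w/2 <= exp (w/2)) by apply exp_ineq1_le.
    unfold E. rewrite exp_half. nra. }
  assert (Hln : ln (1 + E) <= w + / E).
  { replace (1 + E) with (E * (1 + / E)) by (field; lra).
    assert (0 < /E) by (apply Rinv_0_lt_compat; lra).
    rewrite ln_mult by lra. unfold E at 1. rewrite ln_exp.
    pose proof (exp_ineq1_le (ln (1 + / E))). rewrite exp_ln in *; lra. }
  assert (Hinv : / E <= 1 / w).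
  { unfold Rdiv. rewrite Rmult_1_l. apply Rinv_le_contravar; nra. }
  assert (Hq : w - w * E / (1 + E) <= 4 / w).
  { replace (w - w * E / (1 + E)) with (w / (1+E)) by (field; lra).
    apply (Rmult_le_reg_r (w * (1+E))); [nra|].
    replace (w / (1 + E) * (w * (1 + E))) with (w*w) by (field; lra).
    replace (4 / w * (w * (1 + E))) with (4 * (1+E)) by (field; lra).
    nra. }
  replace (5 / w) with (1/w + 4/w) by (field; lra).
  lra.
Qed.

(** ** The gap function [a * g - b * H] *)

Definition gap (a b u : R) : R := a * bhat_profile u - b * ent_profile u.

(** Its derivative has the sign of [b u - a sinh2 u]. *)
Definition gap_slope (a b u : R) : R := b * u - a * sinh2 u.

Lemma gap_deriv (a b u : R) :
  is_derive (gap a b) u (gap_slope a b u * exp u / (1 + exp u)^2).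
Proof.
  unfold gap, gap_slope, bhat_profile, ent_profile, sinh2.
  pose proof (exp_pos u) as Hu.
  auto_derive; [lra|].
  rewrite exp_Ropp, (exp_half u).
  change (u * / 2) with (u/2). pose proof (exp_pos (u/2)).
  field. split; [lra | nra].
Qed.

(** Because [sinh2 u / u] increases, [gap_slope a b] is nonnegative below
    any point where it is nonnegative ... *)
Lemma gap_slope_nonneg_below (a b w u : R) :
  0 <= a -> 0 <= w <= u -> 0 <= gap_slope a b u -> 0 <= gap_slope a b w.
Proof.
  intros Ha [[Hw|<-] Hwu] Hs; unfold gap_slope in *; [|rewrite sinh2_0; lra].
  pose proof (sinh2_ratio_mono w u Hw Hwu).
  assert (0 <= (b*u - a*sinh2 u) * w) by nra.
  assert (0 <= (b*w - a*sinh2 w) * u) by nra.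
  nra.
Qed.

Lemma gap_slope_nonpos_above (a b w u : R) :
  0 <= a -> 0 < u <= w -> gap_slope a b u <= 0 -> gap_slope a b w <= 0.
Proof.
  intros Ha [Hu Huw] Hs. unfold gap_slope in *.
  pose proof (sinh2_ratio_mono u w Hu Huw).
  assert ((b*u - a*sinh2 u) * w <= 0) by nra.
  assert ((b*w - a*sinh2 w) * u <= 0) by nra.
  nra.
Qed.

Lemma deriv_factor_pos (u : R) : 0 < exp u / (1 + exp u)^2.
Proof.
  pose proof (exp_pos u). apply Rdiv_lt_0_compat; [lra|]. apply pow_lt; lra.
Qed.

Lemma gap_incr (a b x y : R) :
  0 <= a -> 0 <= x <= y -> 0 <= gap_slope a b y -> gap a b x <= gap a b y.
Proof.
  intros Ha Hxy Hs.
  apply (nondecreasing_of_deriv (gap a b) (fun u => gap_slope a b u * exp u / (1 + exp u)^2));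
    [lra | intros; apply gap_deriv |].
  intros u Hu. pose proof (gap_slope_nonneg_below a b u y Ha ltac:(lra) Hs).
  pose proof (deriv_factor_pos u). unfold Rdiv in *. rewrite Rmult_assoc. nra.
Qed.

Lemma gap_decr (a b x y : R) :
  0 <= a -> 0 < x <= y -> gap_slope a b x <= 0 -> gap a b y <= gap a b x.
Proof.
  intros Ha Hxy Hs.
  apply (nonincreasing_of_deriv (gap a b) (fun u => gap_slope a b u * exp u / (1 + exp u)^2));
    [lra | intros; apply gap_deriv |].
  intros u Hu. pose proof (gap_slope_nonpos_above a b u x Ha ltac:(lra) Hs).
  pose proof (deriv_factor_pos u). unfold Rdiv in *. rewrite Rmult_assoc. nra.
Qed.

(** Once the gap is decreasing it stays nonnegative, because [g > 0] while
    [H] tends to [0] at infinity. *)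
Lemma gap_tail_nonneg (a b x : R) :
  0 <= a -> 0 <= b -> 0 < x -> gap_slope a b x <= 0 -> 0 <= gap a b x.
Proof.
  intros Ha Hb Hx Hs.
  destruct (Rle_or_lt 0 (gap a b x)) as [|Hneg]; [assumption|exfalso].
  set (d := - gap a b x).
  set (w := x + 5 * b / d + 1).
  assert (Hq : 0 <= 5 * b / d) by (apply Rdiv_le_0_compat; unfold d; lra).
  assert (Hw : 0 < w) by (unfold w; lra).
  assert (Hdecr : gap a b w <= - d).
  { replace (- d) with (gap a b x) by (unfold d; ring). apply gap_decr; unfold w; lra. }
  assert (Hbound : b * ent_profile w < d).
  { apply Rle_lt_trans with (b * (5 / w)).
    - apply Rmult_le_compat_l; [exact Hb | apply ent_profile_le_inv, Hw].
    - apply (Rmult_lt_reg_r w); [exact Hw|].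
      replace (b * (5 / w) * w) with (5 * b) by (field; lra).
      replace (5 * b) with (d * (5 * b / d)) by (field; unfold d; lra).
      unfold w, d in *. nra. }
  pose proof (bhat_profile_pos w). unfold gap in Hdecr. nra.
Qed.

(** [H u > 0]: a binary distribution with finite log-ratio is not deterministic. *)
Lemma ent_profile_pos (u : R) : 0 < ent_profile u.
Proof.
  unfold ent_profile. set (E := exp u).
  assert (HE : 0 < E) by apply exp_pos.
  assert (H1 : 0 < ln (1 + E)) by (rewrite <- ln_1; apply ln_increasing; lra).
  assert (H2 : u < ln (1 + E)) by (rewrite <- (ln_exp u); apply ln_increasing; fold E; lra).
  replace (ln (1 + E) - u * E / (1 + E)) with ((ln (1 + E) + E * (ln (1 + E) - u)) / (1 + E))
    by (field; lra).
  apply Rdiv_lt_0_compat; nra.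
Qed.

Lemma bhat_profile_0 : bhat_profile 0 = 1.
Proof. unfold bhat_profile. replace (0/2) with 0 by field. rewrite exp_0. field. Qed.

Lemma ent_profile_0 : ent_profile 0 = ln 2.
Proof. unfold ent_profile. rewrite exp_0. replace (1+1) with 2 by ring. field. Qed.

(** [H u <= ln 2 * g u]; in bits, [h(p) <= 2 sqrt(p(1-p))]. *)
Lemma ent_le_ln2_bhat (u : R) : 0 <= u -> ent_profile u <= ln 2 * bhat_profile u.
Proof.
  intros Hu. pose proof ln2_pos.
  enough (0 <= gap (ln 2) 1 u) by (unfold gap in *; lra).
  destruct (Rle_or_lt 0 (gap_slope (ln 2) 1 u)) as [Hs|Hs].
  - replace 0 with (gap (ln 2) 1 0) by (unfold gap; rewrite bhat_profile_0, ent_profile_0; ring).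
    apply gap_incr; lra.
  - destruct Hu as [Hu|<-].
    + apply gap_tail_nonneg; lra.
    + unfold gap_slope in Hs. rewrite sinh2_0 in Hs. lra.
Qed.

(** Concavity of [g] in terms of [H]: the tangent at [v > 0], of slope
    [sinh2 v / v], lies above the curve, and meets [H = 0] at a
    nonnegative height. *)
Lemma bhat_tangent (v u : R) : 0 < v -> 0 <= u ->
  gap 1 (sinh2 v / v) u <= gap 1 (sinh2 v / v) v /\ 0 <= gap 1 (sinh2 v / v) v.
Proof.
  intros Hv Hu.
  assert (Hs : gap_slope 1 (sinh2 v / v) v = 0) by (unfold gap_slope; field; lra).
  assert (0 <= sinh2 v / v) by (apply Rdiv_le_0_compat; [apply sinh2_nonneg|]; lra).
  split.
  - destruct (Rle_or_lt u v); [apply gap_incr | apply gap_decr]; lra.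
  - apply gap_tail_nonneg; lra.
Qed.

(** ** Columns of the transition matrix *)

Lemma bhat_profile_col (a b : R) : 0 < a -> 0 < b ->
  (a+b)/2 * bhat_profile (ln (b/a)) = sqrt (a*b).
Proof.
  intros Ha Hb. unfold bhat_profile.
  set (u := ln (b/a)).
  assert (Hu : exp u = b/a) by (apply exp_ln, Rdiv_lt_0_compat; lra).
  pose proof (exp_half u) as Hhalf.
  set (X := exp (u/2)) in *.
  assert (0 < X) by apply exp_pos.
  assert (Hab : a*b = (a*X)*(a*X)).
  { replace ((a*X)*(a*X)) with (a*a*(X*X)) by ring. rewrite <- Hhalf, Hu. field. lra. }
  rewrite Hab, sqrt_square by nra. rewrite Hu. field.
  assert (0 < b/a) by (apply Rdiv_lt_0_compat; lra). lra.
Qed.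

Lemma ent_profile_col (a b : R) : 0 < a -> 0 < b ->
  ent_profile (ln (b/a)) = ln (a+b) - (a * ln a + b * ln b)/(a+b).
Proof.
  intros Ha Hb. unfold ent_profile.
  rewrite exp_ln by (apply Rdiv_lt_0_compat; lra).
  replace (1 + b/a) with ((a+b)/a) by (field; lra).
  rewrite !ln_div by lra. field. lra.
Qed.

Definition col_cap (a b : R) : R :=
  (if Req_EM_T a 0 then 0 else / 2 * a * log2 (a / ((a + b) / 2))) +
  (if Req_EM_T b 0 then 0 else / 2 * b * log2 (b / ((a + b) / 2))).

Lemma capacity_cols (n : nat) (W : bool -> nat -> R) :
  capacity n W = sumn n (fun y => col_cap (W false y) (W true y)).
Proof. reflexivity. Qed.

Definition col_loss (a b : R) : R := ln 2 * ((a+b)/2 - col_cap a b).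

Lemma col_loss_sym (a b : R) : col_loss a b = col_loss b a.
Proof. unfold col_loss, col_cap. rewrite (Rplus_comm a b). ring. Qed.

Lemma col_profile_ordered (a b : R) : 0 < a <= b ->
  0 <= ln (b/a) /\
  sqrt (a*b) = (a+b)/2 * bhat_profile (ln (b/a)) /\
  col_loss a b = (a+b)/2 * ent_profile (ln (b/a)).
Proof.
  intros [Ha Hab]. pose proof ln2_pos.
  split; [|split].
  - rewrite <- ln_1. destruct (Req_dec a b) as [<-|Hne].
    + replace (a/a) with 1 by (field; lra). lra.
    + left. apply ln_increasing; [lra|].
      apply (Rmult_lt_reg_r a); [lra|]. replace (b/a*a) with b by (field; lra). lra.
  - rewrite bhat_profile_col; lra.
  - rewrite ent_profile_col by lra. unfold col_loss, col_cap, log2.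
    destruct (Req_EM_T a 0); [lra|]. destruct (Req_EM_T b 0); [lra|].
    rewrite !ln_div by lra. field. lra.
Qed.

Lemma col_profile (a b : R) : 0 <= a -> 0 <= b ->
  (sqrt (a*b) = 0 /\ col_loss a b = 0) \/
  exists u, 0 <= u /\ sqrt (a*b) = (a+b)/2 * bhat_profile u /\
            col_loss a b = (a+b)/2 * ent_profile u.
Proof.
  intros Ha Hb. pose proof ln2_pos.
  destruct (Req_dec a 0) as [->|Ha0]; [|destruct (Req_dec b 0) as [->|Hb0]].
  - left. rewrite Rmult_0_l, sqrt_0. split; [reflexivity|].
    unfold col_loss, col_cap, log2.
    destruct (Req_EM_T 0 0); [|lra]. destruct (Req_EM_T b 0) as [->|]; [lra|].
    replace (b / ((0+b)/2)) with 2 by (field; lra). field. lra.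
  - left. rewrite Rmult_0_r, sqrt_0. split; [reflexivity|].
    unfold col_loss, col_cap, log2.
    destruct (Req_EM_T 0 0); [|lra]. destruct (Req_EM_T a 0); [lra|].
    replace (a / ((a+0)/2)) with 2 by (field; lra). field. lra.
  - right. destruct (Rle_or_lt a b).
    + exists (ln (b/a)). apply col_profile_ordered. lra.
    + exists (ln (a/b)). rewrite Rmult_comm, col_loss_sym, (Rplus_comm a b).
      apply col_profile_ordered. lra.
Qed.

Lemma col_loss_le_bhat (a b : R) : 0 <= a -> 0 <= b -> col_loss a b <= ln 2 * sqrt (a*b).
Proof.
  intros Ha Hb. pose proof ln2_pos.
  destruct (col_profile a b Ha Hb) as [[-> ->]|[u [Hu [-> ->]]]]; [lra|].
  pose proof (ent_le_ln2_bhat u Hu).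
  assert (0 <= (a+b)/2) by lra. nra.
Qed.

Lemma col_loss_nonneg (a b : R) : 0 <= a -> 0 <= b -> 0 <= col_loss a b.
Proof.
  intros Ha Hb.
  destruct (col_profile a b Ha Hb) as [[_ ->]|[u [_ [_ ->]]]]; [lra|].
  pose proof (ent_profile_pos u). apply Rmult_le_pos; lra.
Qed.

Lemma col_loss_zero (a b : R) : 0 <= a -> 0 <= b -> col_loss a b = 0 -> sqrt (a*b) = 0.
Proof.
  intros Ha Hb Hloss.
  destruct (col_profile a b Ha Hb) as [[-> _]|[u [_ [-> Hl]]]]; [reflexivity|].
  pose proof (ent_profile_pos u).
  assert (Hw : (a+b)/2 = 0) by (rewrite Hl in Hloss; apply Rmult_integral in Hloss; lra).
  rewrite Hw. ring.
Qed.

Lemma col_bhat_le_tangent (v a b : R) : 0 < v -> 0 <= a -> 0 <= b ->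
  sqrt (a*b) <= (a+b)/2 * gap 1 (sinh2 v / v) v + sinh2 v / v * col_loss a b.
Proof.
  intros Hv Ha Hb.
  assert (Hw : 0 <= (a+b)/2) by lra.
  destruct (col_profile a b Ha Hb) as [[-> ->]|[u [Hu [-> ->]]]].
  - destruct (bhat_tangent v v Hv ltac:(lra)) as [_ Hnn].
    pose proof (Rmult_le_pos _ _ Hw Hnn). lra.
  - destruct (bhat_tangent v u Hv Hu) as [Htan _].
    pose proof (Rmult_le_compat_l _ _ _ Hw Htan). unfold gap in *. nra.
Qed.

Lemma col_bhat_le_weight (a b : R) : 0 <= a -> 0 <= b -> sqrt (a*b) <= (a+b)/2.
Proof.
  intros Ha Hb. rewrite <- (sqrt_square ((a+b)/2)) by lra.
  apply sqrt_le_1; [nra | nra |]. pose proof (Rle_0_sqr (a-b)). unfold Rsqr in *. nra.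
Qed.

Lemma sumn_le (n : nat) (f g : nat -> R) :
  (forall k, (k < n)%nat -> f k <= g k) -> sumn n f <= sumn n g.
Proof.
  induction n as [|n IH]; simpl; intros H; [lra|].
  assert (f n <= g n) by (apply H; lia).
  assert (sumn n f <= sumn n g) by (apply IH; intros; apply H; lia). lra.
Qed.

Lemma sumn_ext (n : nat) (f g : nat -> R) :
  (forall k, (k < n)%nat -> f k = g k) -> sumn n f = sumn n g.
Proof.
  intros H. apply Rle_antisym; apply sumn_le; intros k Hk; rewrite H by exact Hk; lra.
Qed.

Lemma sumn_lin (n : nat) (c1 c2 : R) (f g : nat -> R) :
  sumn n (fun y => c1 * f y + c2 * g y) = c1 * sumn n f + c2 * sumn n g.
Proof. induction n as [|n IH]; simpl; [ring|]. rewrite IH. ring. Qed.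

Lemma sumn_scal (n : nat) (c : R) (f : nat -> R) :
  sumn n (fun y => c * f y) = c * sumn n f.
Proof. induction n as [|n IH]; simpl; [ring|]. rewrite IH. ring. Qed.

Lemma sumn_nonneg (n : nat) (f : nat -> R) :
  (forall k, (k < n)%nat -> 0 <= f k) -> 0 <= sumn n f.
Proof.
  intros H. induction n as [|n IH]; simpl; [lra|].
  assert (0 <= f n) by (apply H; lia).
  assert (0 <= sumn n f) by (apply IH; intros; apply H; lia). lra.
Qed.

Lemma sumn_zero_each (n : nat) (f : nat -> R) :
  (forall k, (k < n)%nat -> 0 <= f k) -> sumn n f = 0 ->
  forall k, (k < n)%nat -> f k = 0.
Proof.
  induction n as [|n IH]; simpl; intros H Hs k Hk; [lia|].
  assert (0 <= f n) by (apply H; lia).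
  assert (0 <= sumn n f) by (apply sumn_nonneg; intros; apply H; lia).
  destruct (Nat.eq_dec k n) as [->|Hne]; [lra|].
  apply IH; [intros; apply H; lia | lra | lia].
Qed.

(** ** Channel-level bounds on the Bhattacharyya parameter *)

Lemma channel_weight_sum (n : nat) (W : bool -> nat -> R) : is_channel n W ->
  sumn n (fun y => (W false y + W true y) / 2) = 1.
Proof.
  intros [_ Hsum].
  rewrite (sumn_ext n _ (fun y => /2 * W false y + /2 * W true y)) by (intros; field).
  rewrite sumn_lin, (Hsum false), (Hsum true). field.
Qed.

Lemma channel_loss_sum (n : nat) (W : bool -> nat -> R) : is_channel n W ->
  sumn n (fun y => col_loss (W false y) (W true y)) = ln 2 * (1 - capacity n W).
Proof.
  intros Hch. rewrite capacity_cols, <- (channel_weight_sum n W Hch).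
  unfold col_loss. rewrite sumn_scal.
  rewrite (sumn_ext n _ (fun y => 1 * ((W false y + W true y) / 2)
                                  + (-1) * col_cap (W false y) (W true y))) by (intros; ring).
  rewrite sumn_lin. ring.
Qed.

Lemma one_minus_capacity_le_bhattacharyya (n : nat) (W : bool -> nat -> R) :
  is_channel n W -> 1 - capacity n W <= bhattacharyya n W.
Proof.
  intros Hch. pose proof ln2_pos. pose proof (proj1 Hch) as Hnn.
  apply (Rmult_le_reg_l (ln 2)); [assumption|].
  rewrite <- channel_loss_sum by exact Hch. unfold bhattacharyya. rewrite <- sumn_scal.
  apply sumn_le. intros k Hk. apply col_loss_le_bhat; apply Hnn, Hk.
Qed.

Lemma bsc_profile (eps : R) : 0 < eps < 1 ->
  bhat_profile (ln ((1-eps)/eps)) = 2 * sqrt (eps * (1-eps)) /\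
  ent_profile (ln ((1-eps)/eps)) = ln 2 * hb eps.
Proof.
  intros Heps. pose proof ln2_pos. split.
  - pose proof (bhat_profile_col eps (1-eps) ltac:(lra) ltac:(lra)) as Hg.
    replace ((eps + (1 - eps)) / 2) with (/2) in Hg by field. rewrite <- Hg. field.
  - rewrite ent_profile_col by lra. replace (eps + (1 - eps)) with 1 by ring.
    rewrite ln_1. unfold hb, xlog2x, log2.
    destruct (Req_EM_T eps 0); [lra|]. destruct (Req_EM_T (1-eps) 0); [lra|].
    field. lra.
Qed.

(** The BSC bound for a crossover probability strictly inside [(0, 1/2)]:
    sum the tangent inequality at the BSC's log-ratio over the columns. *)
Lemma bhattacharyya_le_bsc_interior (n : nat) (W : bool -> nat -> R) (eps : R) :
  is_channel n W -> 0 < eps < /2 -> hb eps = 1 - capacity n W ->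
  bhattacharyya n W <= 2 * sqrt (eps * (1 - eps)).
Proof.
  intros Hch Heps Hhb. pose proof (proj1 Hch) as Hnn.
  set (v := ln ((1-eps)/eps)).
  assert (Hv : 0 < v).
  { unfold v. rewrite <- ln_1. apply ln_increasing; [lra|].
    apply (Rmult_lt_reg_r eps); [lra|]. replace ((1-eps)/eps*eps) with (1-eps) by (field; lra). lra. }
  destruct (bsc_profile eps ltac:(lra)) as [Hg Hh]. fold v in Hg, Hh.
  set (s := sinh2 v / v).
  assert (Hsum : bhattacharyya n W <=
    sumn n (fun y => gap 1 s v * ((W false y + W true y)/2) + s * col_loss (W false y) (W true y))).
  { apply sumn_le. intros k Hk.
    pose proof (col_bhat_le_tangent v _ _ Hv (Hnn false k Hk) (Hnn true k Hk)) as Htan.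
    fold s in Htan. lra. }
  rewrite sumn_lin, channel_weight_sum, channel_loss_sum, <- Hhb, <- Hh in Hsum by exact Hch.
  unfold gap in Hsum. rewrite <- Hg. lra.
Qed.

(** The BSC bound for [eps = 1/2]: [Z <= 1]. *)
Lemma bhattacharyya_le_one (n : nat) (W : bool -> nat -> R) :
  is_channel n W -> bhattacharyya n W <= 1.
Proof.
  intros Hch. pose proof (proj1 Hch) as Hnn.
  rewrite <- (channel_weight_sum n W Hch). apply sumn_le. intros k Hk.
  apply col_bhat_le_weight; apply Hnn, Hk.
Qed.

(** The BSC bound for [eps = 0]: a channel of capacity 1 has [Z = 0]. *)
Lemma bhattacharyya_capacity_one (n : nat) (W : bool -> nat -> R) :
  is_channel n W -> capacity n W = 1 -> bhattacharyya n W = 0.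
Proof.
  intros Hch HC. pose proof (proj1 Hch) as Hnn.
  pose proof (channel_loss_sum n W Hch) as Hloss.
  rewrite HC, Rminus_diag, Rmult_0_r in Hloss.
  assert (Hcol := sumn_zero_each n _ (fun k Hk => col_loss_nonneg _ _ (Hnn false k Hk) (Hnn true k Hk)) Hloss).
  unfold bhattacharyya. rewrite (sumn_ext n _ (fun _ => 0 * 0)).
  - rewrite sumn_scal. ring.
  - intros k Hk. rewrite Rmult_0_l. apply col_loss_zero; [apply Hnn, Hk | apply Hnn, Hk | apply Hcol, Hk].
Qed.

Lemma hb_0 : hb 0 = 0.
Proof.
  unfold hb, xlog2x, log2. rewrite Rminus_0_r.
  destruct (Req_EM_T 0 0) as [_|]; [|lra]. destruct (Req_EM_T 1 0); [lra|].
  rewrite ln_1. field. apply Rgt_not_eq, ln2_pos.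
Qed.

Lemma bhattacharyya_le_bsc (n : nat) (W : bool -> nat -> R) (eps : R) :
  is_channel n W -> 0 <= eps <= /2 -> hb eps = 1 - capacity n W ->
  bhattacharyya n W <= 2 * sqrt (eps * (1 - eps)).
Proof.
  intros Hch Heps Hhb.
  destruct (Req_dec eps 0) as [->|He0].
  - rewrite hb_0 in Hhb. rewrite bhattacharyya_capacity_one by (auto; lra).
    rewrite Rmult_0_l, sqrt_0. lra.
  - destruct (Req_dec eps (/2)) as [->|Hhalf].
    + replace (/2 * (1 - /2)) with (/2 * /2) by field.
      rewrite sqrt_square by lra. replace (2 * /2) with 1 by field.
      apply bhattacharyya_le_one, Hch.
    + apply bhattacharyya_le_bsc_interior; auto. lra.
Qed.

(** ** The expurgated exponent is antitone in [Z] *)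

Lemma rpow_nonneg (z a : R) : 0 <= rpow z a.
Proof. unfold rpow. destruct (Rle_dec z 0); [lra|]. left. apply exp_pos. Qed.

Lemma rpow_mono (z1 z2 a : R) : 0 < a -> z1 <= z2 -> rpow z1 a <= rpow z2 a.
Proof.
  intros Ha Hz. unfold rpow.
  destruct (Rle_dec z1 0); destruct (Rle_dec z2 0); try lra.
  - left. apply exp_pos.
  - apply Rle_Rpower_l; lra.
Qed.

Lemma Ex_antitone (rho z1 z2 : R) : 1 <= rho -> z1 <= z2 -> Ex rho z2 <= Ex rho z1.
Proof.
  intros Hr Hz. unfold Ex, log2. pose proof ln2_pos.
  assert (Hinv : 0 < / rho) by (apply Rinv_0_lt_compat; lra).
  pose proof (rpow_mono z1 z2 (/rho) Hinv Hz).
  pose proof (rpow_nonneg z1 (/rho)).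
  assert (Hln : ln ((1 + rpow z1 (/rho))/2) <= ln ((1 + rpow z2 (/rho))/2)).
  { destruct (Req_dec (rpow z1 (/rho)) (rpow z2 (/rho))) as [->|Hne]; [lra|].
    left. apply ln_increasing; lra. }
  apply Rmult_le_compat_r with (r := / ln 2) in Hln; [|left; apply Rinv_0_lt_compat; lra].
  unfold Rdiv. nra.
Qed.

Lemma sup_ge1_mono (f g : R -> R) : (forall rho, 1 <= rho -> f rho <= g rho) ->
  Rbar_le (sup_ge1 f) (sup_ge1 g).
Proof.
  intros Hfg. unfold sup_ge1.
  destruct (excluded_middle_informative (bound (img_ge1 g))) as [Bg|Bg];
    [|destruct (excluded_middle_informative (bound (img_ge1 f))); exact I].
  destruct (completeness (img_ge1 g) Bg (img_ge1_ne g)) as [lg [Ulg Llg]]; simpl.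
  assert (Uf : is_upper_bound (img_ge1 f) lg).
  { intros x [rho [Hr ->]]. apply Rle_trans with (g rho); [auto|]. apply Ulg. exists rho; auto. }
  destruct (excluded_middle_informative (bound (img_ge1 f))) as [Bf|Bf].
  - destruct (completeness (img_ge1 f) Bf (img_ge1_ne f)) as [lf [Ulf Llf]]; simpl. apply Llf, Uf.
  - exfalso. apply Bf. exists lg. exact Uf.
Qed.

Lemma Eex_antitone (z1 z2 Rt : R) : z1 <= z2 -> Rbar_le (Eex z2 Rt) (Eex z1 Rt).
Proof.
  intros Hz. apply sup_ge1_mono. intros rho Hr.
  pose proof (Ex_antitone rho z1 z2 Hr Hz). lra.
Qed.

Theorem mainTheorem9 :
  forall (n : nat) (W : bool -> nat -> R),
    BIMS n W ->
    forall (Rt : R), 0 <= Rt ->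
    forall (eps : R), 0 <= eps <= / 2 -> hb eps = 1 - capacity n W ->
      Rbar_le (Eex_bsc_eps Rt eps) (Eex (bhattacharyya n W) Rt) /\
      Rbar_le (Eex (bhattacharyya n W) Rt) (Eex_bec Rt (capacity n W)).
Proof.
  intros n W [Hch _] Rt _ eps Heps Hhb.
  split; apply Eex_antitone.
  - apply (bhattacharyya_le_bsc n W eps Hch Heps Hhb).
  - apply one_minus_capacity_le_bhattacharyya, Hch.
Qed.
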